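(* The assignment of the function $\mathsf{h}:G_C[l]\rightarrow G_W[l]$ given by $\mathsf{h}(H,\varrho)=(H,\mu_{(H,\varrho)})$ with $(H,\varrho)\in G_C[l]$ to each $l\in\mathbb{N}$ defines a morphism $\mathsf{h}\in\mathrm{Hom}_{\underline{\rm GM}_\Omega}(G_C\Omega,G_W\Omega)$ of the graded $\Omega$ monads $G_C\Omega$, $G_W\Omega$.
   Context: $\Omega$ is the category of finite ordinals $[l]=\{0,\dots,l-1\}$ and all functions. $G[l]$ is the set of hypergraphs on $[l]$, $Gf(H)=\{f(X)\mid X\in H\}$, $H\smile K=H\cup(K+l)$, $O=\emptyset$. Fix finite additive commutative monoids $\mathsf{A}$, $\mathsf{M}$. $G_C\Omega$ is the calibrated hypergraph graded $\Omega$ monad: $G_C[l]=\{(H,\varrho)\}$ where $\varrho$ assigns to each hyperedge $X$ a function $\varrho_X:\mathsf{A}^X\to\mathsf{M}$; $G_Cf(H,\varrho)=(Gf(H),f_{H*}(\varrho))$ with $f_{H*}(\varrho)_Y=\sum_{X\in H,f(X)=Y}f|_{X*}(\varrho_X)$, $f_*(\varpi)(v)=\sum_{f_\star(w)=v}\varpi(w)$, $f_\star(w)(s)=\sum_{f(r)=s}w(r)$; product $(H,\varrho)\smile(K,\varsigma)=(H\smile K,\varrho\smile\varsigma)$, unit $(O,\varepsilon)$. $G_W\Omega$ is the weighted hypergraph graded $\Omega$ monad: $G_W[l]=\{(H,\alpha)\mid H\in G[l],\alpha\in\mathsf{M}^H\}$, $G_Wf(H,\alpha)=(Gf(H),f_{H*}(\alpha))$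 with $f_{H*}(\alpha)_Y=\sum_{X\in H,f(X)=Y}\alpha_X$, product $(H,\alpha)\smile(K,\beta)=(H\smile K,\alpha\smile\beta)$ where $(\alpha\smile\beta)_X=\alpha_X$ for $X\in H$, $\beta_{X-l}$ for $X\in K+l$, unit $(O,\upsilon)$, $\upsilon=0_\emptyset$. The weight function of $(H,\varrho)$ is $\mu_{(H,\varrho)X}=\sum_{w\in\mathsf{A}^X}\varrho_X(w)$. A morphism of graded $\Omega$ monads is a collection of functions $\mathsf{m}:D[l]\to E[l]$ with $\mathsf{m}\circ Df=Ef\circ\mathsf{m}$, $\mathsf{m}(\lambda\smile\mu)=\mathsf{m}(\lambda)\smile\mathsf{m}(\mu)$, $\mathsf{m}(\iota)=\iota$. *)

From HB Require Import structures.
From mathcomp Require Import all_boot all_order all_algebra.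
Set Implicit Arguments. Unset Strict Implicit. Unset Printing Implicit Defensive.
Import GRing.Theory.
Local Open Scope ring_scope.

Section Hypergraphs.
Variables (A M : finNmodType).

Definition Afun (l : nat) (X : {set 'I_l}) := {ffun {x : 'I_l | x \in X} -> A}.

(* Raw data of G_C[l]: a set of subsets together with a family rho_X : A^X -> M *)
Definition GC (l : nat) : Type :=
  ({set {set 'I_l}} * (forall X : {set 'I_l}, Afun X -> M))%type.
Definition GW (l : nat) : Type := ({set {set 'I_l}} * {ffun {set 'I_l} -> M})%type.

Definition hypergraph l (H : {set {set 'I_l}}) : bool := set0 \notin H.

(* elements of G_C[l]: rho_X is only data for X in H (canonically 0 elsewhere) *)
Definition GC_mem l (x : GC l) : Prop :=
  hypergraph x.1 /\ forall X, X \notin x.1 -> forall w, x.2 X w = 0.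
Definition GW_mem l (x : GW l) : Prop :=
  hypergraph x.1 /\ forall X, X \notin x.1 -> x.2 X = 0.

Definition Gmap l m (f : 'I_l -> 'I_m) (H : {set {set 'I_l}}) : {set {set 'I_m}} :=
  (fun X : {set 'I_l} => f @: X) @: H.

Definition fstar l m (f : 'I_l -> 'I_m) (X : {set 'I_l}) (Y : {set 'I_m})
  (w : Afun X) : Afun Y :=
  [ffun s => \sum_(r : {x : 'I_l | x \in X} | f (val r) == val s) w r].

Definition fpush l m (f : 'I_l -> 'I_m) (X : {set 'I_l}) (Y : {set 'I_m})
  (varpi : Afun X -> M) : Afun Y -> M :=
  fun v => \sum_(w : Afun X | @fstar l m f X Y w == v) varpi w.

Definition GCmap l m (f : 'I_l -> 'I_m) (x : GC l) : GC m :=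
  (Gmap f x.1,
   fun Y v => \sum_(X in x.1 | f @: X == Y) @fpush l m f X Y (x.2 X) v).

Definition GWmap l m (f : 'I_l -> 'I_m) (x : GW l) : GW m :=
  (Gmap f x.1, [ffun Y => \sum_(X in x.1 | f @: X == Y) x.2 X]).

Definition Gprod l m (H : {set {set 'I_l}}) (K : {set {set 'I_m}})
  : {set {set 'I_(l + m)}} :=
  ((fun X : {set 'I_l} => lshift m @: X) @: H) :|: ((fun Y : {set 'I_m} => @rshift l m @: Y) @: K).

Definition preim l n (g : 'I_l -> 'I_n) (Z : {set 'I_n}) : {set 'I_l} :=
  [set x | g x \in Z].

Lemma preimP l n (g : 'I_l -> 'I_n) (Z : {set 'I_n}) (x : {x : 'I_l | x \in preim g Z}) :
  g (val x) \in Z.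
Proof. by have := valP x; rewrite inE. Defined.

Definition restr l n (g : 'I_l -> 'I_n) (Z : {set 'I_n}) (w : Afun Z)
  : Afun (preim g Z) :=
  [ffun x => w (exist _ (g (val x)) (preimP x))].

(* (alpha smile beta)_Z = alpha_X if Z = X (X in H), beta_{Z-l} if Z in K + l *)
Definition GWprod l m (x : GW l) (y : GW m) : GW (l + m) :=
  (Gprod x.1 y.1,
   [ffun Z => (if Z == lshift m @: preim (lshift m) Z then x.2 (preim (lshift m) Z) else 0)
            + (if Z == @rshift l m @: preim (@rshift l m) Z then y.2 (preim (@rshift l m) Z) else 0)]).

(* (rho smile sigma)_Z = rho_X if Z = X (X in H), sigma_{Z-l} if Z in K + l,
   with A^Z identified with A^X (resp. A^(Z-l)) along the shift *)
Definition GCprod l m (x : GC l) (y : GC m) : GC (l + m) :=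
  (Gprod x.1 y.1,
   fun Z w =>
     (if Z == lshift m @: preim (lshift m) Z
      then x.2 (preim (lshift m) Z) (restr (lshift m) w) else 0)
   + (if Z == @rshift l m @: preim (@rshift l m) Z
      then y.2 (preim (@rshift l m) Z) (restr (@rshift l m) w) else 0)).

Definition GCunit : GC 0 := (set0, fun _ _ => 0).
Definition GWunit : GW 0 := (set0, [ffun _ => 0]).

Definition mu l (x : GC l) : {ffun {set 'I_l} -> M} :=
  [ffun X => \sum_(w : Afun X) x.2 X w].

Definition hmap l (x : GC l) : GW l := (x.1, mu x).

End Hypergraphs.

From Pilot Require Import Defs.
From mathcomp Require Import all_boot all_order all_algebra.
Set Implicit Arguments. Unset Strict Implicit. Unset Printing Implicit Defensive.
Import GRing.Theory.
Local Open Scope ring_scope.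

(* The weight [mu] is the total mass of each calibration.  Pushing forward
   along [f] only regroups the terms of this mass by the fibres of [f_star],
   so total masses, hence [h], commute with [G f].  On a product, a shifted
   hyperedge [Z] is the image of its preimage under the injective shift, and
   restriction along the shift is then a bijection [A^Z -> A^X], so the mass
   of the shifted calibration is that of the original one. *)

Section WeightMorphism.
Variables A M : finNmodType.

Lemma hmap_mem l (x : GC A M l) : GC_mem x -> GW_mem (hmap x).
Proof.
move=> [hypH rho0]; split=> // X XnH.
by rewrite ffunE big1 // => w _; apply: rho0.
Qed.

Lemma sum_fpush l m (f : 'I_l -> 'I_m) (X : {set 'I_l}) (Y : {set 'I_m})
    (varpi : Afun A X -> M) :
  \sum_(v : Afun A Y) fpush f varpi v = \sum_(w : Afun A X) varpi w.
Proof. by rewrite (partition_big (fstar f Y) xpredT). Qed.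

Lemma hmap_GCmap l m (f : 'I_l -> 'I_m) (x : GC A M l) :
  hmap (GCmap f x) = GWmap f (hmap x).
Proof.
congr pair; apply/ffunP => Y; rewrite !ffunE /= exchange_big.
by apply: eq_bigr => X _; rewrite ffunE sum_fpush.
Qed.

Section Restriction.
Variables (l n : nat) (g : 'I_l -> 'I_n) (Z : {set 'I_n}).
Hypotheses (g_inj : injective g) (Z_img : Z = g @: Defs.preim g Z).

Lemma restr_inj : injective (@restr A l n g Z).
Proof.
move=> w1 w2 eqw; apply/ffunP => z.
have : val z \in g @: Defs.preim g Z by rewrite -Z_img (valP z).
case/imsetP => x xP ez.
have := congr1 (fun u : Afun A (Defs.preim g Z) => u (exist _ x xP)) eqw.
rewrite !ffunE.
by have -> : exist _ (g x) (preimP (exist _ x xP)) = z by apply: val_inj.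
Qed.

Lemma restr_bij : bijective (@restr A l n g Z).
Proof.
have cardZ : #|Z| = #|Defs.preim g Z| by rewrite [in LHS]Z_img card_imset.
apply: (inj_card_bij restr_inj).
by rewrite !card_ffun !card_sig -cardZ.
Qed.

Lemma sum_restr (F : Afun A (Defs.preim g Z) -> M) :
  \sum_(w : Afun A Z) F (restr g w) = \sum_u F u.
Proof. by rewrite (reindex _ (onW_bij _ restr_bij)). Qed.

End Restriction.

Lemma hmap_GCprod l m (x : GC A M l) (y : GC A M m) :
  hmap (GCprod x y) = GWprod (hmap x) (hmap y).
Proof.
congr pair; apply/ffunP => Z; rewrite !ffunE big_split /=.
congr (_ + _); case: eqP => [Z_img | _]; try by rewrite big1.
  by rewrite (sum_restr (@lshift_inj l m)) // ffunE.
by rewrite (sum_restr (@rshift_inj l m)) // ffunE.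
Qed.

Lemma hmap_GCunit : hmap (GCunit A M) = GWunit M.
Proof. by congr pair; apply/ffunP => X; rewrite !ffunE big1. Qed.

End WeightMorphism.

Theorem proposition3p43 (A M : finNmodType) :
  (* h maps G_C[l] into G_W[l] *)
  (forall (l : nat) (x : GC A M l), GC_mem x -> GW_mem (hmap x)) /\
  (* naturality: h o G_C f = G_W f o h *)
  (forall (l m : nat) (f : 'I_l -> 'I_m) (x : GC A M l),
      GC_mem x -> hmap (GCmap f x) = GWmap f (hmap x)) /\
  (* compatibility with the products *)
  (forall (l m : nat) (x : GC A M l) (y : GC A M m),
      GC_mem x -> GC_mem y -> hmap (GCprod x y) = GWprod (hmap x) (hmap y)) /\
  (* compatibility with the units *)
  hmap (GCunit A M) = GWunit M.
Proof.
split; first exact: hmap_mem.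
split; first by move=> l m f x _; apply: hmap_GCmap.
split; first by move=> l m x y _ _; apply: hmap_GCprod.
exact: hmap_GCunit.
Qed.
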